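(* Let $\mathbb{K}$ be a field of characteristic different from $2$, let $d\ge 1$, and let $V,W$ be finite-dimensional $\mathbb{K}$-vector spaces with $\dim_{\mathbb K}V=N$ and $\dim_{\mathbb K}W=M$. Let $A(\xi):V\to W$, $\xi\in\mathbb{K}^d$, be a homogeneous symbol of degree $k$, i.e. in fixed bases $A(\xi)$ is an $M\times N$ matrix whose entries are homogeneous polynomials of degree $k$ in $\mathbb{K}[\xi_1,\dots,\xi_d]$; denote its columns by $a_1(\xi),\dots,a_N(\xi)\in W$. Assume that there is an integer $r\ge 0$ with $\operatorname{rank}_{\mathbb K}A(\xi)=r$ for all $\xi\in\mathbb{K}^d\setminus\{0\}$. Let $X:=\left(\bigwedge^{r+1}W\right)^{\binom{N}{r}}$ (with the convention $\binom{M}{M+1}=0$, so $X=\{0\}$ if $r=M$), and define $Q(\xi):W\to X$ by $$Q(\xi)(w):=\big(a_{i_1}(\xi)\wedge\cdots\wedge a_{i_r}(\xi)\wedge w\big)_{1\le i_1<\cdots<i_r\le N}.$$ Then $Q(\xi)$ is a homogeneous symbol on $\mathbb{K}^d$ such that: (1) if $r<\dim W$, the order (degree in $\xi$) of $Q(\xi)$ is $rk$; (2) if $r=M$, then $X=\{0\}$ and $Q(\xi)$ is the zero operator; (3) in either case, $\operatorname{im}A(\xi)=\ker Q(\xi)$ for all nonzero $\xi\in\mathbb{K}^d$.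
   Context: For a vector space $W$ and $r\le \dim W$, $\bigwedge^{r}W$ denotes the $r$-fold exterior power, spanned inside $W^{\otimes r}$ by $m_1\wedge\cdots\wedge m_r:=\sum_{\sigma\in S_r}\operatorname{sign}(\sigma)\,m_{\sigma(1)}\otimes\cdots\otimes m_{\sigma(r)}$. *)

From HB Require Import structures.
From mathcomp Require Import all_boot all_order all_algebra.
From mathcomp Require Import fingroup perm.
From mathcomp Require Import mpoly.
Set Implicit Arguments. Unset Strict Implicit. Unset Printing Implicit Defensive.
Import GRing.Theory.
Local Open Scope ring_scope.

(* The tensor power W^{(x) r} is represented by its coordinates in the
   standard product basis: functions {ffun 'I_r -> 'I_M} -> K, the
   coordinate of m_1 (x) ... (x) m_r at the multi-index f being
   prod_j m_j (f j). *)

(* m_1 /\ ... /\ m_r := sum_{s in S_r} sign(s) m_{s(1)} (x) ... (x) m_{s(r)} *)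
Definition wedge (K : fieldType) (M r : nat) (m : 'I_r -> 'cV[K]_M)
  : {ffun {ffun 'I_r -> 'I_M} -> K} :=
  [ffun f : {ffun 'I_r -> 'I_M} => \sum_(s : 'S_r) (-1) ^+ s * \prod_(j < r) m (s j) (f j) 0].

Definition incr (r N : nat) (i : {ffun 'I_r -> 'I_N}) : bool :=
  [forall j : 'I_r, forall j' : 'I_r, (j < j')%N ==> (i j < i j')%N].

Definition incr_idx (r N : nat) := {i : {ffun 'I_r -> 'I_N} | incr i}.

Definition symb_eval (K : fieldType) (d M N : nat)
  (A : 'M[{mpoly K[d]}]_(M, N)) (xi : 'rV[K]_d) : 'M[K]_(M, N) :=
  map_mx (meval (fun j => xi 0 j)) A.

Definition Qargs (K : fieldType) (M N r : nat) (B : 'M[K]_(M, N))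
  (i : {ffun 'I_r -> 'I_N}) (w : 'cV[K]_M) (j : 'I_r.+1) : 'cV[K]_M :=
  match unlift ord_max j with
  | Some j' => col (i j') B
  | None => w
  end.

(* Q(xi)(w) := (a_{i_1}(xi) /\ ... /\ a_{i_r}(xi) /\ w)_{i_1 < ... < i_r},
   an element of X = (Lambda^{r+1} W)^{binom N r} (inside (W^{(x) r+1})^{binom N r}) *)
Definition Qop (K : fieldType) (d M N : nat) (A : 'M[{mpoly K[d]}]_(M, N))
  (r : nat) (xi : 'rV[K]_d) (w : 'cV[K]_M)
  : {ffun incr_idx r N -> {ffun {ffun 'I_r.+1 -> 'I_M} -> K}} :=
  [ffun i => wedge (Qargs (symb_eval A xi) (val i) w)].

From HB Require Import structures.
From mathcomp Require Import all_boot all_order all_algebra.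
From mathcomp Require Import fingroup perm.
From mathcomp Require Import mpoly.
Set Implicit Arguments. Unset Strict Implicit. Unset Printing Implicit Defensive.
Import Order.TTheory GRing.Theory.
Local Open Scope ring_scope.

(* In coordinates, the f-th component of m_1 /\ ... /\ m_n is the n x n minor
   of the matrix with columns m_1, ..., m_n taken on the rows f, so the wedge
   vanishes iff m_1, ..., m_n are linearly dependent.  Choosing indices
   i_1 < ... < i_r such that a_{i_1}(xi), ..., a_{i_r}(xi) is a basis of
   im A(xi), Q(xi) w = 0 forces w into that span, while any r + 1 vectors of
   im A(xi) are dependent: this is im A(xi) = ker Q(xi).  Expanding the minors
   along the column of w writes Q(xi) as a matrix whose entries are r x r
   minors of A(xi), hence homogeneous of degree r k. *)

Section Wedge.
Variable K : fieldType.

Definition rowsmx M n (m : 'I_n -> 'cV[K]_M) : 'M[K]_(n, M) :=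
  \matrix_(l, a) m l a 0.

Lemma row_rowsmx M n (m : 'I_n -> 'cV[K]_M) l : row l (rowsmx m) = (m l)^T.
Proof. by apply/rowP => a; rewrite !mxE. Qed.

Lemma wedgeE M n (m : 'I_n -> 'cV[K]_M) f :
  wedge m f = \det (rowsub f (rowsmx m)^T).
Proof.
rewrite ffunE /determinant; apply: eq_bigr => s _; congr (_ * _).
by apply: eq_bigr => j _; rewrite !mxE.
Qed.

Lemma wedge_eq0P M n (m : 'I_n -> 'cV[K]_M) :
  wedge m = 0 <-> (\rank (rowsmx m) < n)%N.
Proof.
split=> [m0 | lt_rank_n].
  rewrite ltnNge; apply/negP => le_n_rank.
  have full_mT : row_full (rowsmx m)^T.
    by rewrite /row_full mxrank_tr eqn_leq rank_leq_row le_n_rank.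
  have := fullrowsub_unit full_mT.
  by rewrite unitmxE unitfE -wedgeE m0 ffunE eqxx.
apply/ffunP => f; rewrite wedgeE ffunE.
apply: contraTeq lt_rank_n => det_neq0.
have unit_f : rowsub f (rowsmx m)^T \in unitmx by rewrite unitmxE unitfE.
rewrite -leqNgt -[X in (X <= _)%N](mxrank_unit unit_f).
by rewrite -[X in (_ <= X)%N]mxrank_tr mxrankS ?rowsub_sub.
Qed.

Lemma wedge_eq0_gt_dim M n (m : 'I_n -> 'cV[K]_M) :
  (M < n)%N -> wedge m = 0.
Proof. by move=> lt_M_n; apply/wedge_eq0P/(leq_ltn_trans (rank_leq_col _)). Qed.

End Wedge.

Lemma incr_enum N r (S : {set 'I_N}) :
  #|S| = r -> exists i : incr_idx r N, {subset S <= codom (val i)}.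
Proof.
move=> cardS.
pose i := [ffun j : 'I_r => Order.enum_val (cast_ord (esym cardS) j) : 'I_N].
have incr_i : incr i.
  apply/forallP => j; apply/forallP => j'; apply/implyP => lt_jj'.
  rewrite !ffunE; apply: etrans lt_jj'.
  exact: (leW_mono (Order.le_enum_val (@le_total _ 'I_N) (A := S))).
exists (exist _ i incr_i) => x Sx /=; apply/codomP.
exists (cast_ord cardS (Order.enum_rank_in Sx x)).
by rewrite ffunE cast_ordK Order.enum_rankK_in.
Qed.

Lemma incr_basis (K : fieldType) N M r (Bt : 'M[K]_(N, M)) :
  \rank Bt = r -> exists i : incr_idx r N, (Bt <= rowsub (val i) Bt)%MS.
Proof.
move=> rankBt; pose g := maxrankfun Bt.
pose S := [set g j | j : 'I_(\rank Bt)].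
have [i S_i] : exists i : incr_idx r N, {subset S <= codom (val i)}.
  by apply: incr_enum; rewrite card_imset ?card_ord //; apply: maxrankfun_inj.
exists i; rewrite -{1}(eq_maxrowsub Bt).
apply/row_subP => j; rewrite row_rowsub.
have /S_i/codomP[j' ->] : g j \in S by apply: imset_f.
by rewrite -row_rowsub row_sub.
Qed.

Section Kernel.
Variables (K : fieldType) (M N r : nat) (B : 'M[K]_(M, N)).

Lemma row_rowsmx_Qargs_lift (i : {ffun 'I_r -> 'I_N}) w j :
  row (lift ord_max j) (rowsmx (Qargs B i w)) = row (i j) B^T.
Proof. by rewrite row_rowsmx /Qargs liftK tr_col. Qed.

Lemma row_rowsmx_Qargs_max (i : {ffun 'I_r -> 'I_N}) w :
  row ord_max (rowsmx (Qargs B i w)) = w^T.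
Proof. by rewrite row_rowsmx /Qargs unlift_none. Qed.

Lemma rowsmx_Qargs (i : {ffun 'I_r -> 'I_N}) w :
  (rowsmx (Qargs B i w) :=: rowsub i B^T + w^T)%MS.
Proof.
apply/eqmxP/andP; split.
  apply/row_subP => l; case: (unliftP ord_max l) => [j ->|->].
    rewrite row_rowsmx_Qargs_lift; apply: submx_trans (addsmxSl _ _).
    by rewrite -row_rowsub row_sub.
  by rewrite row_rowsmx_Qargs_max addsmxSr.
rewrite addsmx_sub -(row_rowsmx_Qargs_max i) row_sub andbT.
by apply/row_subP => j; rewrite row_rowsub -(row_rowsmx_Qargs_lift i w) row_sub.
Qed.

Lemma wedge_Qargs_eq0P (i : {ffun 'I_r -> 'I_N}) w :
  wedge (Qargs B i w) = 0 <-> (\rank (rowsub i B^T + w^T) <= r)%N.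
Proof. by have := wedge_eq0P (Qargs B i w); rewrite rowsmx_Qargs ltnS. Qed.

Lemma wedges_Qargs_eq0P w : \rank B = r ->
  (forall i : incr_idx r N, wedge (Qargs B (val i) w) = 0) <-> (w^T <= B^T)%MS.
Proof.
move=> rankB; have rankBt : \rank B^T = r by rewrite mxrank_tr.
split=> [Qw0 | w_in i]; last first.
  apply/wedge_Qargs_eq0P; rewrite -[X in (_ <= X)%N]rankBt.
  by rewrite mxrankS // addsmx_sub rowsub_sub.
have [i Bt_sub] := incr_basis rankBt; set Bi := rowsub (val i) B^T.
have rankBi : \rank Bi = r.
  by apply/eqP; rewrite eqn_leq rank_leq_row -{1}rankBt (mxrankS Bt_sub).
have BiwBi : (Bi + w^T <= Bi)%MS.
  rewrite -(mxrank_leqif_sup (addsmxSl Bi w^T)).2 eqn_leq mxrankS ?addsmxSl //.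
  by rewrite rankBi; apply/wedge_Qargs_eq0P.
by rewrite (submx_trans (addsmxSr Bi _) (submx_trans BiwBi (rowsub_sub _ _))).
Qed.

End Kernel.

Lemma col_submxP (K : fieldType) m n (B : 'M[K]_(m, n)) (w : 'cV[K]_m) :
  (exists v, w = B *m v) <-> (w^T <= B^T)%MS.
Proof.
split=> [[v ->] | /submxP[D wD]]; first by rewrite trmx_mul submxMl.
by exists D^T; rewrite -[w]trmxK wD trmx_mul trmxK.
Qed.

Lemma prod_dhomog (R : comNzRingType) d n k (F : 'I_n -> {mpoly R[d]}) :
  (forall i, F i \is k.-homog) -> \prod_(i < n) F i \is (n * k).-homog.
Proof.
elim: n F => [|n IH] F F_homog; first by rewrite big_ord0 dhomog1.
by rewrite big_ord_recr mulSnr dhomogM ?IH.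
Qed.

Lemma det_dhomog (R : comNzRingType) d n k (C : 'M[{mpoly R[d]}]_n) :
  (forall i j, C i j \is k.-homog) -> \det C \is (n * k).-homog.
Proof.
move=> C_homog; apply: rpred_sum => s _.
by rewrite rpredMsign prod_dhomog.
Qed.

Section Symbol.
Variables (K : fieldType) (d M N r : nat) (A : 'M[{mpoly K[d]}]_(M, N)).

Lemma Qop_eq0P xi w : \rank (symb_eval A xi) = r ->
  Qop A r xi w = 0 <-> exists v, w = symb_eval A xi *m v.
Proof.
move=> rankA; apply: iff_trans (iff_sym (col_submxP _ _)).
apply: iff_trans (wedges_Qargs_eq0P w rankA).
split=> [Q0 i | Q0]; first by move/ffunP: Q0 => /(_ i); rewrite !ffunE.
by apply/ffunP => i; rewrite !ffunE Q0.
Qed.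

Lemma Qop_neq0 : (0 < d)%N ->
  (forall xi : 'rV[K]_d, xi != 0 -> \rank (symb_eval A xi) = r) ->
  (r < M)%N -> exists (xi : 'rV[K]_d) (w : 'cV[K]_M), Qop A r xi w != 0.
Proof.
move=> d_gt0 rankA lt_r_M; pose xi : 'rV[K]_d := const_mx 1.
have xi_neq0 : xi != 0.
  apply/eqP => /matrixP/(_ 0 (Ordinal d_gt0)).
  by rewrite !mxE; apply/eqP/oner_neq0.
have [j notin_im] : exists j, ~~ (row j 1%:M <= (symb_eval A xi)^T)%MS.
  apply/row_subPn/negP => /mxrankS; rewrite mxrank1 mxrank_tr rankA //.
  by rewrite leqNgt lt_r_M.
exists xi, (row j 1%:M)^T; apply/negP => /eqP /(Qop_eq0P _ (rankA _ xi_neq0)).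
by move/col_submxP; rewrite trmxK (negbTE notin_im).
Qed.

(* Column [ord_max] stands for [w]; it does not enter the cofactors along it. *)
Definition Qminor (i : incr_idx r N) (f : {ffun 'I_r.+1 -> 'I_M}) :
    'M[{mpoly K[d]}]_r.+1 :=
  \matrix_(j, l) if unlift ord_max l is Some l' then A (f j) (val i l') else 0.

Definition Qcoef (i : incr_idx r N) (f : {ffun 'I_r.+1 -> 'I_M}) (m : 'I_M) :
    {mpoly K[d]} :=
  \sum_(j < r.+1 | f j == m) cofactor (Qminor i f) j ord_max.

Lemma Qcoef_dhomog k : (forall a b, A a b \is k.-homog) ->
  forall i f m, Qcoef i f m \is (r * k).-homog.
Proof.
move=> A_homog i f m; apply: rpred_sum => j _.
by rewrite rpredMsign det_dhomog // => a b; rewrite !mxE liftK.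
Qed.

Lemma cofactor_Qminor_eval xi w i (f : {ffun 'I_r.+1 -> 'I_M}) j :
  cofactor (rowsub f (rowsmx (Qargs (symb_eval A xi) (val i) w))^T) j ord_max
  = (cofactor (Qminor i f) j ord_max).@[fun l => xi 0 l].
Proof.
rewrite /cofactor rmorphM rmorph_sign -det_map_mx; congr (_ * \det _).
by apply/matrixP => a b; rewrite !mxE /Qargs liftK !mxE.
Qed.

Lemma Qop_Qcoef xi w i f :
  Qop A r xi w i f = \sum_(m < M) (Qcoef i f m).@[fun l => xi 0 l] * w m 0.
Proof.
rewrite ffunE wedgeE (expand_det_col _ ord_max).
rewrite (partition_big (fun j => f j) xpredT) //=.
apply: eq_bigr => m _; rewrite raddf_sum mulr_suml.
apply: eq_bigr => j /eqP fj_m.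
by rewrite cofactor_Qminor_eval mulrC !mxE /Qargs unlift_none fj_m.
Qed.

End Symbol.

Theorem lemma2p1 (K : fieldType) (d M N k r : nat)
    (A : 'M[{mpoly K[d]}]_(M, N)) :
  ~~ (2 \in [pchar K]) ->
  (0 < d)%N ->
  (forall i j, A i j \is k.-homog) ->
  (forall xi : 'rV[K]_d, xi != 0 -> \rank (symb_eval A xi) = r) ->
  (* Q is a homogeneous symbol, with entries homogeneous of degree r*k *)
  (exists P : incr_idx r N -> {ffun 'I_r.+1 -> 'I_M} -> 'I_M -> {mpoly K[d]},
      (forall i f m, P i f m \is (r * k).-homog) /\
      (forall (xi : 'rV[K]_d) (w : 'cV[K]_M) i f,
          Qop A r xi w i f = \sum_(m < M) (P i f m).@[fun j => xi 0 j] * w m 0))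
  (* (1) if r < dim W, Q is a nonzero symbol (so its order is exactly r*k) *)
  /\ ((r < M)%N -> exists (xi : 'rV[K]_d) (w : 'cV[K]_M), Qop A r xi w != 0)
  (* (2) if r = M, X = {0} and Q is the zero operator *)
  /\ (r = M ->
        (forall m : 'I_r.+1 -> 'cV[K]_M, wedge m = 0) /\
        (forall (xi : 'rV[K]_d) (w : 'cV[K]_M), Qop A r xi w = 0))
  (* (3) im A(xi) = ker Q(xi) for xi <> 0 *)
  /\ (forall xi : 'rV[K]_d, xi != 0 -> forall w : 'cV[K]_M,
        (exists v : 'cV[K]_N, w = symb_eval A xi *m v) <-> Qop A r xi w = 0).
Proof.
(* No assumption on the characteristic is needed: [wedge] is the determinantal
   alternating sum, which detects linear dependence in every characteristic. *)
move=> _ d_gt0 A_homog rankA; split; [|split; [|split]].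
- exists (Qcoef A); split; first exact: Qcoef_dhomog.
  exact: Qop_Qcoef.
- exact: Qop_neq0.
- move=> r_eq_M; have wedge0 (m : 'I_r.+1 -> 'cV[K]_M) : wedge m = 0.
    by apply: wedge_eq0_gt_dim; rewrite r_eq_M.
  by split=> // xi w; apply/ffunP => i; rewrite !ffunE wedge0.
- by move=> xi xi_neq0 w; apply: iff_sym; apply/Qop_eq0P/rankA.
Qed.
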